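(* The price of equitability is $\Omega(n^2)$ with respect to the \textsc{Min-Sum} objective and $\Omega(n)$ with respect to the \textsc{Min-Max} objective, where $n$ is the number of agents.
   Context: An instance $\mathcal{I}$ has agents $N=[n]$, projects $P$, timesteps $T=[\ell]$, and disapproval sets $D_{ik}\subseteq P$. An outcome is $\mathbf{o}\in P^\ell$ and $d_i(\mathbf{o})=|\{k\in T:o_k\in D_{ik}\}|$. An outcome is equitable if $d_i(\mathbf{o})=d_j(\mathbf{o})$ for all $i,j\in N$. For $W\in\{\textsc{Min-Sum},\textsc{Min-Max}\}$, the $W$-value of $\mathbf{o}$ is $\sum_i d_i(\mathbf{o})$ or $\max_i d_i(\mathbf{o})$ respectively. The price of equitability with respect to $W$ is the supremum, over instances admitting at least one equitable outcome, of the ratio between the minimum $W$-value over equitable outcomes and the minimum $W$-value over all outcomes, considered as a function of $n$. *)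

From mathcomp Require Import all_boot all_order all_algebra.
Set Implicit Arguments. Unset Strict Implicit. Unset Printing Implicit Defensive.

(* An instance with n agents ('I_n), projects 'I_m, timesteps 'I_l and
   disapproval sets D i k \subseteq P (agent i, timestep k). *)
Definition outcome (m l : nat) := {ffun 'I_l -> 'I_m}.

Definition disutil (n m l : nat) (D : 'I_n -> 'I_l -> {set 'I_m})
  (o : outcome m l) (i : 'I_n) : nat :=
  #|[set k : 'I_l | o k \in D i k]|.

Definition equitable (n m l : nat) (D : 'I_n -> 'I_l -> {set 'I_m})
  (o : outcome m l) : Prop :=
  forall i j : 'I_n, disutil D o i = disutil D o j.

Inductive objective := MinSum | MinMax.

Definition Wvalue (W : objective) (n m l : nat) (D : 'I_n -> 'I_l -> {set 'I_m})
  (o : outcome m l) : nat :=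
  match W with
  | MinSum => (\sum_(i < n) disutil D o i)%N
  | MinMax => (\max_(i < n) disutil D o i)%N
  end.

(* "The price of equitability w.r.t. W is Omega(f(n))": there are c > 0 and N
   such that for every n >= N some instance with n agents admits an equitable
   outcome and has ratio (min W over equitable outcomes)/(min W over all
   outcomes) >= c * f(n).  The optimum over all outcomes is required to be
   positive (if it is 0 the all-zero outcome is equitable and the ratio is 0/0). *)
Definition PoE_Omega (W : objective) (f : nat -> nat) : Prop :=
  exists (c : rat) (N : nat), (0 < c)%R /\
    forall n : nat, (N <= n)%N ->
      exists (m l : nat) (D : 'I_n -> 'I_l -> {set 'I_m}),
        (exists o : outcome m l, equitable D o) /\
        exists oopt : outcome m l,
          (forall o : outcome m l, (Wvalue W D oopt <= Wvalue W D o)%N) /\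
          (0 < Wvalue W D oopt)%N /\
          forall o : outcome m l, equitable D o ->
            (c * (f n)%:R * (Wvalue W D oopt)%:R <= (Wvalue W D o)%:R)%R.

From mathcomp Require Import all_boot all_order all_algebra.
From mathcomp Require Import zify.

(* In the instance below, choosing project 0 everywhere costs a single unit, to
   agent 0 at timestep 0, so both optima are 1.  Choosing project 1 at a
   timestep k > 0 hurts every agent except agent k.  If an equitable outcome
   chose 0 at some k > 0, then agent k, hence everybody, would have disutility
   c, the number of timesteps k > 0 carrying a 1; since agent 0 is hurt at
   timestep 0, c > 0, and an agent whose own timestep carries a 1 has only
   c - 1.  Hence an equitable outcome chooses 1 at every k > 0, every agent then
   has disutility n - 2, and the equitable values are n (n - 2) and n - 2. *)

Set Implicit Arguments.
Unset Strict Implicit.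
Unset Printing Implicit Defensive.

Import GRing.Theory Num.Theory.

Section Objectives.
Variables (n m l : nat) (D : 'I_n -> 'I_l -> {set 'I_m}).

Lemma Wvalue_ge_disutil W (o : outcome m l) (i : 'I_n) :
  disutil D o i <= Wvalue W D o.
Proof.
case: W => /=; first by rewrite (bigD1 i) //= leq_addr.
exact: (leq_bigmax_cond (F := disutil D o)).
Qed.

Lemma Wvalue_indicator W (o : outcome m l) (i0 : 'I_n) :
  (forall i, disutil D o i = (i == i0)) -> Wvalue W D o = 1.
Proof.
move=> d_o; have d_other (i : 'I_n) : i != i0 -> disutil D o i = 0.
  by rewrite d_o => /negbTE ->.
by case: W => /=; rewrite (bigD1 i0) //= big1 // d_o eqxx.
Qed.

Lemma Wvalue_MinSum_const (o : outcome m l) d :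
  (forall i, disutil D o i = d) -> Wvalue MinSum D o = n * d.
Proof.
by move=> d_o; rewrite /= (eq_bigr (fun=> d)) // sum_nat_const card_ord.
Qed.

End Objectives.

Definition unit_optimum W n m l (D : 'I_n -> 'I_l -> {set 'I_m}) :=
  [/\ exists o, equitable D o,
      exists o, Wvalue W D o = 1
    & forall o, 0 < Wvalue W D o].

Lemma PoE_Omega_of_unit_optimum W f k N : 0 < k ->
  (forall n, N <= n -> exists m l (D : 'I_n -> 'I_l -> {set 'I_m}),
    unit_optimum W D /\ forall o, equitable D o -> f n <= k * Wvalue W D o) ->
  PoE_Omega W f.
Proof.
move=> k_gt0 instances; exists (k%:R)^-1%R, N; split=> [|n /instances].
  by rewrite invr_gt0 ltr0n.
case=> m [l [D [[[o eq_o] [oopt opt1] W_gt0] bound]]].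
exists m, l, D; split; first by exists o.
exists oopt; rewrite opt1; split=> [o'|]; first exact: W_gt0.
split=> // o' /bound f_le.
rewrite mulr1 mulrC ler_pdivrMr ?ltr0n //.
by rewrite -natrM ler_nat mulnC.
Qed.

Section HardInstance.
Variable p : nat.
Local Notation n := p.+3.

(* Project 1 is [ord_max].  Exempting agent 0 at timesteps 1 and 2 compensates
   its forced unit at timestep 0, which makes the all-1 outcome equitable. *)
Definition hard_instance (i k : 'I_n) : {set 'I_2} :=
  if k == ord0 then (if i == ord0 then setT else set0)
  else if (i == k) || (i == ord0) && (k <= 2) then set0
  else [set ord_max].

Definition chosen1 (o : outcome 2 n) : {set 'I_n} :=
  [set k | (k != ord0) && (o k == ord_max)].

Local Notation d := (disutil hard_instance).

Lemma disutil_agent o (i : 'I_n) : i != ord0 ->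
  d o i = #|chosen1 o| - (o i == ord_max).
Proof.
move=> i0; rewrite /disutil; have -> : [set k | o k \in hard_instance i k] = chosen1 o :\ i.
  apply/setP => k; rewrite !inE /hard_instance (negbTE i0).
  case: (k =P ord0) => [-> | _] /=; first by rewrite inE andbF.
  by case: (i =P k) => [-> | /eqP ik]; rewrite !inE ?eqxx // [k == i]eq_sym ik.
by have := cardsD1 i (chosen1 o); rewrite !inE i0 => ->; rewrite addKn.
Qed.

Lemma disutil_agent0_gt0 o : 0 < d o ord0.
Proof. by rewrite card_gt0; apply/set0Pn; exists ord0; rewrite !inE. Qed.

Lemma disutil_full o (i : 'I_n) :
  chosen1 o = [set~ ord0] -> i != ord0 -> d o i = p.+1.
Proof.
move=> full i0; rewrite disutil_agent // full cardsC1 card_ord.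
have : i \in chosen1 o by rewrite full !inE.
by rewrite inE => /andP[_ ->].
Qed.

Lemma chosen1_equitable o : equitable hard_instance o -> chosen1 o = [set~ ord0].
Proof.
move=> eq_o; apply/setP => k; rewrite !inE; case: (k =P ord0) => //= /eqP k0.
apply/negPn/negP => ok.
have d0 : d o ord0 = #|chosen1 o| by rewrite (eq_o _ k) disutil_agent // (negbTE ok) subn0.
have S_gt0 : 0 < #|chosen1 o| by rewrite -d0 disutil_agent0_gt0.
have /set0Pn[j] : chosen1 o != set0 by rewrite -card_gt0.
rewrite inE => /andP[j0 oj].
by have := eq_o j ord0; rewrite disutil_agent // oj d0; lia.
Qed.

Lemma disutil_equitable o : equitable hard_instance o -> forall i, d o i = p.+1.
Proof. by move=> eq_o i; rewrite (eq_o i ord_max) disutil_full ?chosen1_equitable. Qed.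

Lemma equitable_ones : equitable hard_instance [ffun=> ord_max].
Proof.
have full : chosen1 [ffun=> ord_max] = [set~ ord0].
  by apply/setP => k; rewrite !inE ffunE eqxx andbT.
suff d_ones i : d [ffun=> ord_max] i = p.+1 by move=> i j; rewrite !d_ones.
case: (i =P ord0) => [-> | /eqP i0]; last exact: disutil_full.
rewrite /disutil.
have -> : [set k | [ffun=> ord_max] k \in hard_instance ord0 k] =
          ~: [set Ordinal (isT : 1 < n); Ordinal (isT : 2 < n)].
  by apply/setP => -[[|[|[|k]]] hk]; rewrite !inE ?ffunE.
by rewrite cardsCs setCK cards2 card_ord.
Qed.

Lemma disutil_zeros i : d [ffun=> ord0] i = (i == ord0).
Proof.
case: (i =P ord0) => [-> | /eqP i0]; last first.
  rewrite disutil_agent //.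
  have -> : chosen1 [ffun=> ord0] = set0 by apply/setP => k; rewrite !inE ffunE andbF.
  by rewrite cards0 ffunE.
rewrite /disutil.
suff -> : [set k | [ffun=> ord0] k \in hard_instance ord0 k] = [set ord0].
  by rewrite cards1.
apply/setP => k; rewrite !inE ffunE /hard_instance.
by case: (k == ord0); rewrite ?inE //; case: ifP; rewrite inE.
Qed.

Lemma hard_instance_unit_optimum W : unit_optimum W hard_instance.
Proof.
split; first by exists [ffun=> ord_max]; exact: equitable_ones.
  by exists [ffun=> ord0]; apply: Wvalue_indicator; exact: disutil_zeros.
move=> o; exact: leq_trans (disutil_agent0_gt0 o) (Wvalue_ge_disutil _ W o ord0).
Qed.

End HardInstance.

Theorem theorem13 :
  PoE_Omega MinSum (fun n => n ^ 2)%N /\ PoE_Omega MinMax (fun n => n).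
Proof.
split; apply: (@PoE_Omega_of_unit_optimum _ _ 3 3) => // -[|[|[|p]]] // _;
  exists 2, p.+3, (@hard_instance p);
  split=> [|o /disutil_equitable d_o]; try exact: hard_instance_unit_optimum.
- by rewrite (Wvalue_MinSum_const d_o); nia.
- by have := Wvalue_ge_disutil (@hard_instance p) MinMax o ord0; rewrite d_o; lia.
Qed.
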